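(* Let $S$ be a nonempty product-free set of positive integers (i.e. there are no $a,b,c\in S$, not necessarily distinct, with $ab=c$), and let $a$ be the least element of $S$. Then the upper asymptotic density of $S$ satisfies $$ \limsup_{x\to\infty}\frac{|S\cap[1,x]|}{x} \le 1-\frac{1}{2a}. $$ More precisely, $|S\cap[1,x]|\le x-\frac12\lfloor x/a\rfloor$ for every real $x\ge a$. *)

From Stdlib Require Import Reals List Arith ZArith.
Open Scope R_scope.

Definition countUpTo (S : nat -> bool) (x : R) : nat :=
  length (filter S (seq 1 (Z.to_nat (Int_part x)))).

From Stdlib Require Import Reals List Arith ZArith Lia Lra.
Open Scope R_scope.

(* Split [1, m] into the members and the non-members ("gaps") of
   S.  If S is product-free and a is in S, then multiplication by a maps the
   members of S in [1, q] injectively to gaps in [1, a q].  Taking q = m / a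
   (integer division) gives  #members[1,q] <= #gaps[1,m],  and trivially
   #gaps[1,q] <= #gaps[1,m]; adding, q <= 2 #gaps[1,m] = 2 (m - #members[1,m]),
   i.e.  #members[1,m] <= m - q/2.  With m = floor x and floor(x/a) <= m / a this
   is the explicit bound; dividing by x and using floor(x/a) > x/a - 1 gives
   the density bound, with an error term 1/(2x) that is eventually below eps. *)

Definition members (S : nat -> bool) (n : nat) : nat :=
  length (filter S (seq 1 n)).
Definition gaps (S : nat -> bool) (n : nat) : nat :=
  length (filter (fun k => negb (S k)) (seq 1 n)).

Lemma countUpTo_members (S : nat -> bool) (x : R) :
  countUpTo S x = members S (Z.to_nat (Int_part x)).
Proof. reflexivity. Qed.

Lemma members_gaps (S : nat -> bool) (n : nat) :
  (members S n + gaps S n = n)%nat.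
Proof. unfold members, gaps. now rewrite filter_length, length_seq. Qed.

Lemma members_succ (S : nat -> bool) (n : nat) :
  members S (Datatypes.S n) = (members S n + if S (Datatypes.S n) then 1 else 0)%nat.
Proof.
  unfold members. rewrite seq_S, filter_app, length_app. simpl.
  now destruct (S (Datatypes.S n)).
Qed.

Lemma gaps_succ (S : nat -> bool) (n : nat) :
  gaps S (Datatypes.S n) = (gaps S n + if S (Datatypes.S n) then 0 else 1)%nat.
Proof.
  unfold gaps. rewrite seq_S, filter_app, length_app. simpl.
  now destruct (S (Datatypes.S n)).
Qed.

Lemma gaps_mono (S : nat -> bool) (n m : nat) :
  (n <= m)%nat -> (gaps S n <= gaps S m)%nat.
Proof.
  induction 1 as [|m _ IH]; [lia|].
  rewrite gaps_succ. lia.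
Qed.

Lemma members_le_gaps_dilate (S : nat -> bool) (a : nat) (Ha1 : (1 <= a)%nat)
  (Hdil : forall k, S k = true -> S (a * k)%nat = false) (q : nat) :
  (members S q <= gaps S (a * q))%nat.
Proof.
  induction q as [|q IH]; [now rewrite Nat.mul_0_r|].
  rewrite members_succ.
  (* a (q+1) = b + 1 with b = a q + (a - 1) >= a q *)
  set (b := (a * q + (a - 1))%nat).
  assert (Hb : (a * Datatypes.S q)%nat = Datatypes.S b)
    by (unfold b; rewrite Nat.mul_succ_r; lia).
  assert (Hmono : (gaps S (a * q) <= gaps S b)%nat) by (apply gaps_mono; lia).
  rewrite Hb, gaps_succ, <- Hb.
  destruct (S (Datatypes.S q)) eqn:Hq; [|lia].
  rewrite (Hdil _ Hq). lia.
Qed.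

Lemma members_bound_nat (S : nat -> bool) (a : nat) (Ha1 : (1 <= a)%nat)
  (Hdil : forall k, S k = true -> S (a * k)%nat = false) (m : nat) :
  (2 * members S m + m / a <= 2 * m)%nat.
Proof.
  set (q := (m / a)%nat).
  assert (Hqm : (a * q <= m)%nat) by apply Nat.Div0.mul_div_le.
  assert (Hmem : (members S q <= gaps S m)%nat).
  { eapply Nat.le_trans; [apply (members_le_gaps_dilate S a Ha1 Hdil)|].
    now apply gaps_mono. }
  assert (Hgap : (gaps S q <= gaps S m)%nat) by (apply gaps_mono; nia).
  pose proof (members_gaps S q). pose proof (members_gaps S m). lia.
Qed.

Lemma INR_floor (x : R) (Hx : 0 <= x) :
  INR (Z.to_nat (Int_part x)) = IZR (Int_part x).
Proof.
  destruct (base_Int_part x) as [_ Hfl].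
  rewrite INR_IZR_INZ, Z2Nat.id; [reflexivity|].
  apply Z.lt_succ_r, lt_IZR. rewrite succ_IZR. simpl. lra.
Qed.

Lemma Int_part_div_le (x : R) (a : nat) (Ha1 : (1 <= a)%nat) (Hx : 0 <= x) :
  IZR (Int_part (x / INR a)) <= INR (Z.to_nat (Int_part x) / a).
Proof.
  set (m := Z.to_nat (Int_part x)). set (q := (m / a)%nat).
  destruct (base_Int_part x) as [_ Hfloor_x].
  destruct (base_Int_part (x / INR a)) as [Hfloor_xa _].
  assert (HaR : 1 <= INR a) by (apply (le_INR 1); exact Ha1).
  pose proof (INR_floor x Hx) as Hm. fold m in Hm.
  (* x < m + 1 <= a (q + 1), hence x / a < q + 1 *)
  assert (Hlt : (Datatypes.S m <= a * Datatypes.S q)%nat)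
    by (apply Nat.mul_succ_div_gt; lia).
  apply le_INR in Hlt. rewrite mult_INR, !S_INR in Hlt.
  assert (Hxa : x / INR a < INR q + 1).
  { apply Rmult_lt_reg_r with (INR a); [lra|].
    unfold Rdiv. rewrite Rmult_assoc, Rinv_l; lra. }
  rewrite (INR_IZR_INZ q). apply IZR_le, Z.lt_succ_r, lt_IZR.
  rewrite succ_IZR, <- INR_IZR_INZ. lra.
Qed.

Lemma members_bound_real (S : nat -> bool) (a : nat) (Ha1 : (1 <= a)%nat)
  (Hdil : forall k, S k = true -> S (a * k)%nat = false) (x : R) (Hx : 0 <= x) :
  INR (countUpTo S x) <= x - (1 / 2) * IZR (Int_part (x / INR a)).
Proof.
  rewrite countUpTo_members.
  set (m := Z.to_nat (Int_part x)).
  pose proof (Int_part_div_le x a Ha1 Hx) as Hfloor. fold m in Hfloor.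
  pose proof (members_bound_nat S a Ha1 Hdil m) as Hnat.
  apply le_INR in Hnat. rewrite plus_INR, !mult_INR in Hnat. simpl in Hnat.
  assert (Hmx : INR m <= x)
    by (unfold m; rewrite INR_floor by exact Hx; apply base_Int_part).
  lra.
Qed.

(* A bound c <= x - floor(x/a)/2 gives c / x <= 1 - 1/(2a) + 1/(2x), since
   floor(x/a) > x/a - 1; the error 1/(2x) is below eps once x >= 1/eps. *)
Lemma ratio_bound (a x c eps : R) (Ha : 0 < a) (Heps : 0 < eps) (Hx : 1 / eps <= x)
  (Hc : c <= x - (1 / 2) * IZR (Int_part (x / a))) :
  c / x <= 1 - 1 / (2 * a) + eps.
Proof.
  destruct (base_Int_part (x / a)) as [_ Hfl].
  assert (Hx0 : 0 < x) by (apply Rlt_le_trans with (1 / eps);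
                           [apply Rdiv_lt_0_compat|]; lra).
  assert (Hepsx : 1 <= eps * x).
  { replace 1 with (eps * (1 / eps)) by (field; lra).
    apply Rmult_le_compat_l; lra. }
  apply Rmult_le_reg_r with x; [exact Hx0|].
  replace (c / x * x) with c by (field; lra).
  assert (Hxa : x / a = x * (1 / (2 * a)) * 2) by (field; lra).
  nra.
Qed.

Theorem mainTheorem6 (S : nat -> bool) (a : nat)
  (Hpos : forall n, S n = true -> (1 <= n)%nat)
  (Hpf : forall x y z, S x = true -> S y = true -> S z = true -> (x * y)%nat <> z)
  (Ha : S a = true)
  (Hmin : forall n, S n = true -> (a <= n)%nat) :
  (forall eps : R, eps > 0 -> exists N : R, forall x : R, x >= N ->
      INR (countUpTo S x) / x <= 1 - 1 / (2 * INR a) + eps)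
  /\
  (forall x : R, x >= INR a ->
      INR (countUpTo S x) <= x - (1 / 2) * IZR (Int_part (x / INR a))).
Proof.
  pose proof (Hpos a Ha) as Ha1.
  assert (HaR : 1 <= INR a) by (apply (le_INR 1); exact Ha1).
  (* product-freeness: a k is never in S when k is *)
  assert (Hdil : forall k, S k = true -> S (a * k)%nat = false).
  { intros k Hk. destruct (S (a * k)%nat) eqn:Hak; [|reflexivity].
    exfalso. exact (Hpf a k _ Ha Hk Hak eq_refl). }
  assert (Hexplicit : forall x : R, x >= INR a ->
      INR (countUpTo S x) <= x - (1 / 2) * IZR (Int_part (x / INR a)))
    by (intros x Hx; apply members_bound_real; [exact Ha1 | exact Hdil | lra]).
  split; [|exact Hexplicit].
  intros eps Heps. exists (INR a + 1 / eps). intros x Hx.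
  assert (Hinv : 0 < 1 / eps) by (apply Rdiv_lt_0_compat; lra).
  apply ratio_bound; [lra | lra | lra | apply Hexplicit; lra].
Qed.
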